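(* Let $E$ be a real Hilbert space, $C\subseteq E$ nonempty closed convex, $\rho=\sup_{x,y\in C}\lVert x-y\rVert\in[0,+\infty]$, $a\in C$, $0<\theta_1\leqslant\dots\leqslant\theta_T$, and $\widehat{x}_t^*\in E$ arbitrary predictions. Suppose the learner plays $\widetilde{x}_1=a$, $\widetilde{x}_t=P_C\big(\widetilde{x}_{t-1}-\theta_{t-1}x_{t-1}^*\big)$ for $t\geqslant2$, and $x_t=P_C\big(\widetilde{x}_t-\theta_t\widehat{x}_t^*\big)$. Then for all $z\in C$, \[\mathrm{Regret}(z,\dots,z)\leqslant\frac1{2\theta_1}\lVert z-a\rVert^2+\sum_{t=1}^T\frac1{\theta_t}Q_\rho^\star\big(\theta_t\lVert x_t^*-\widehat{x}_t^*\rVert\big)-\sum_{t=1}^T\frac1{2\theta_t}\lVert x_t-\widetilde{x}_t\rVert^2,\] and also \[\mathrm{Regret}(z,\dots,z)\leqslant\frac1{2\theta_1}\lVert z-a\rVert^2+\sum_{t=1}^T\frac1{\theta_t}\Phi_{\theta_t}(x_t^*,\widehat{x}_t^* )-\sum_{t=1}^T\frac1{2\theta_t}\lVert y_t-\widetilde{x}_t\rVert^2,\] where $y_t=P_C\big(\widetilde{x}_t-\theta_t\widehat{y}_t^*\big)$.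
   Context: $P_C$ is the metric projection onto $C$. Protocol: at rounds $t=1,\dots,T$ the learner plays $x_t\in C$, the adversary reveals a proper $\varphi_t\colon E\to(-\infty,+\infty]$ with $C\subseteq\operatorname{dom}\partial\varphi_t$, and $x_t^*\in\partial\varphi_t(x_t)$ ($E$ identified with its dual). $\mathrm{Regret}(z,\dots,z)=\sum_t\varphi_t(x_t)-\sum_t\varphi_t(z)$. $Q_\rho^\star(\varkappa)=\frac12\varkappa^2-\frac12(\lvert\varkappa\rvert-\rho)_+^2$ (with $Q_\infty^\star(\varkappa)=\frac12\varkappa^2$), $x_+=\max\{x,0\}$. $\widehat{y}_t^*=\lambda\widehat{x}_t^*+(1-\lambda)x_t^*$, $\lambda=\min\{\lVert x_t^*\rVert/\lVert x_t^*-\widehat{x}_t^*\rVert,1\}$ (any $\lambda$ if $x_t^*=\widehat{x}_t^*$). For $\xi>0$: $\Phi_\xi(x^*,\widehat{x}^* )=Q_\rho^\star\big(\xi\min\{\lVert x^*-\widehat{x}^*\rVert,\lVert x^*\rVert\}\big)+\xi\lVert x^*\rVert\min\{\xi(\lVert x^*-\widehat{x}^*\rVert-\lVert x^*\rVert)_+,\rho\}$. *)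

From HB Require Import structures.
From mathcomp Require Import all_boot all_order all_algebra.
From mathcomp Require Import all_classical all_reals all_analysis.
Set Implicit Arguments. Unset Strict Implicit. Unset Printing Implicit Defensive.
Import Order.TTheory GRing.Theory Num.Theory.
Import numFieldNormedType.Exports.
Local Open Scope classical_set_scope.
Local Open Scope ring_scope.

(* A real Hilbert space: a complete normed space (completeNormedModType R)
   whose norm comes from an inner product [ip]. *)
Definition is_inner_product (R : realType) (E : completeNormedModType R)
  (ip : E -> E -> R) : Prop :=
  [/\ (forall x y, ip x y = ip y x),
      (forall x y z, ip (x + y) z = ip x z + ip y z),
      (forall (k : R) x y, ip (k *: x) y = k * ip x y) &
      (forall x, ip x x = `|x| ^+ 2)].

Definition is_proj (R : realType) (E : completeNormedModType R)
  (C : set E) (x p : E) : Prop :=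
  C p /\ forall c, C c -> `|x - p| <= `|x - c|.

(* Subgradient (E identified with its dual through ip):
   s \in \partial f(x)  iff  f(x) finite and f(y) >= f(x) + <s, y - x>. *)
Definition is_subgrad (R : realType) (E : completeNormedModType R)
  (ip : E -> E -> R) (f : E -> \bar R) (x s : E) : Prop :=
  f x \is a fin_num /\ forall y, (f x + (ip s (y - x))%:E <= f y)%E.

Definition proper_fun (R : realType) (E : completeNormedModType R)
  (f : E -> \bar R) : Prop :=
  (forall x, f x != -oo%E) /\ exists x, f x != +oo%E.

Definition diam (R : realType) (E : completeNormedModType R) (C : set E)
  : \bar R :=
  ereal_sup [set (`|x - y|)%:E | x in C & y in C].

Definition pospart (R : realType) (x : R) : R := Num.max x 0.

Definition Qstar (R : realType) (rho : \bar R) (k : R) : R :=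
  match rho with
  | EFin r => k ^+ 2 / 2 - (pospart (`|k| - r)) ^+ 2 / 2
  | _ => k ^+ 2 / 2
  end.

Definition min_rho (R : realType) (rho : \bar R) (u : R) : R :=
  match rho with
  | EFin r => Num.min u r
  | _ => u
  end.

Definition Phi (R : realType) (E : completeNormedModType R) (rho : \bar R)
  (xi : R) (xs xh : E) : R :=
  Qstar rho (xi * Num.min `|xs - xh| `|xs|)
  + xi * `|xs| * min_rho rho (xi * pospart (`|xs - xh| - `|xs|)).

(* lambda = min{ |xs| / |xs - xh|, 1 }; when xs = xh any lambda gives the
   same yhat, and here the division by 0 yields lambda = 0. *)
Definition lam (R : realType) (E : completeNormedModType R) (xs xh : E) : R :=
  Num.min (`|xs| / `|xs - xh|) 1.

Definition yhat (R : realType) (E : completeNormedModType R) (xs xh : E) : E :=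
  lam xs xh *: xh + (1 - lam xs xh) *: xs.

From HB Require Import structures.
From mathcomp Require Import all_boot all_order all_algebra.
From mathcomp Require Import all_classical all_reals all_analysis.
From mathcomp Require Import ring lra.
Import Order.TTheory GRing.Theory Num.Theory.
Import numFieldNormedType.Exports.
Local Open Scope classical_set_scope.
Local Open Scope ring_scope.
Set Implicit Arguments. Unset Strict Implicit.

(* Each round is a projected gradient step, controlled by the three-point
   inequality [th <g, p - c> <= (|u - c|^2 - |u - p|^2 - |p - c|^2) / 2] of
   [p = P_C (u - th g)] at any [c] in [C].  Splitting [th_t <x*_t, x_t - z>]
   at the next iterate [w], two such inequalities leave
   [th_t <x*_t - xh*_t, x_t - w> - |x_t - w|^2 / 2], which Cauchy-Schwarz and
   the Fenchel-Young inequality for [Q*_rho] (note [|x_t - w| <= rho]) bound by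
   [Q*_rho (th_t |x*_t - xh*_t|)]; the terms [|xt_t - z|^2 / (2 th_t)]
   telescope because [1 / th_t] is nonincreasing.  The second bound runs the
   same argument with [yh*_t], at distance [min (|x*_t - xh*_t|, |x*_t|)] from
   [x*_t], and pays for [x_t <> y_t] by nonexpansiveness of [P_C]:
   [|x_t - y_t| <= th_t |yh*_t - xh*_t| = th_t (|x*_t - xh*_t| - |x*_t|)_+]. *)

Section RealFacts.
Variable R : realType.

(* [Qstar rho] is the convex conjugate of [r |-> r ^+ 2 / 2] on [0, rho];
   this is the Fenchel-Young inequality for it. *)
Lemma Qstar_ge (rho : \bar R) (k r : R) :
  0 <= k -> 0 <= r -> (r%:E <= rho)%E -> k * r - r ^+ 2 / 2 <= Qstar rho k.
Proof.
move=> k0 r0; have := sqr_ge0 (k - r).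
case: rho => [rr||] /= sq rrho; [|nra|by []].
rewrite lee_fin in rrho; rewrite ger0_norm // /pospart.
have [kr|kr] := lerP (k - rr) 0; nra.
Qed.

Lemma le_min_rho (rho : \bar R) (u v : R) :
  (u%:E <= rho)%E -> u <= v -> u <= min_rho rho v.
Proof. by case: rho => [r||] //=; rewrite lee_fin le_min => -> ->. Qed.

Lemma nondecreasing_gt0 (theta : nat -> R) (T : nat) :
  0 < theta 1%N -> (forall t, (1 <= t < T)%N -> theta t <= theta t.+1) ->
  forall t, (1 <= t <= T)%N -> 0 < theta t.
Proof.
move=> th1 th_mono; elim=> [//|[_ _ //|t IH] /andP[_ tT]].
exact: (lt_le_trans (IH (ltnW tT)) (th_mono t.+1 tT)).
Qed.

Lemma telescope_nonincreasing (w D : nat -> R) (n : nat) :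
  (0 < n)%N -> (forall t, (1 <= t < n)%N -> w t.+1 <= w t) ->
  (forall t, 0 <= D t) ->
  \sum_(1 <= t < n.+1) w t * (D t - D t.+1) + w n * D n.+1 <= w 1%N * D 1%N.
Proof.
case: n => // n _; elim: n => [|n IH] w_mono D_ge0.
  by rewrite big_nat1 mulrBr subrK.
rewrite big_nat_recr //=.
have w_mono' t : (0 < t < n.+1)%N -> w t.+1 <= w t.
  by case/andP=> t0 tn; apply: w_mono; rewrite t0 (leqW tn).
have := IH w_mono' D_ge0.
have := ler_wpM2r (D_ge0 n.+2) (w_mono n.+1 (leqnn _)).
move: (\sum_(1 <= t < n.+2) _) => S; rewrite mulrBr; lra.
Qed.

Lemma sum_round_bounds (T : nat) (theta f D P N : nat -> R) (d1 : R) :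
  0 < theta 1%N -> (forall t, (1 <= t < T)%N -> theta t <= theta t.+1) ->
  (forall t, 0 <= D t) -> D T.+1 = 0 -> D 1%N <= d1 ->
  (forall t, (1 <= t <= T)%N ->
     theta t * f t <= (D t - D t.+1) / 2 + P t - N t / 2) ->
  \sum_(1 <= t < T.+1) f t <= d1 / (2 * theta 1%N)
     + \sum_(1 <= t < T.+1) (theta t)^-1 * P t
     - \sum_(1 <= t < T.+1) N t / (2 * theta t).
Proof.
move=> th1 th_mono D_ge0 DT D1 round.
have th_gt0 := nondecreasing_gt0 th1 th_mono.
have f_le t : (1 <= t < T.+1)%N -> f t <=
    (theta t)^-1 * (D t / 2 - D t.+1 / 2) + (theta t)^-1 * P t - N t / (2 * theta t).
  move=> tT; have th0 := th_gt0 t tT.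
  have -> : (theta t)^-1 * (D t / 2 - D t.+1 / 2) + (theta t)^-1 * P t
      - N t / (2 * theta t) = (theta t)^-1 * ((D t - D t.+1) / 2 + P t - N t / 2).
    by field; rewrite gt_eqF.
  by rewrite -(ler_pM2l th0) mulrA mulfV ?gt_eqF // mul1r round.
have tel : \sum_(1 <= t < T.+1) (theta t)^-1 * (D t / 2 - D t.+1 / 2)
    <= d1 / (2 * theta 1%N).
  apply: le_trans (_ : _ <= D 1%N / (2 * theta 1%N)) _; last first.
    by rewrite ler_pM2r ?invr_gt0 ?mulr_gt0.
  case: (posnP T) => [T0|T_gt0].
    by move: DT; rewrite T0 big_geq // => ->; rewrite mul0r.
  have w_mono t : (1 <= t < T)%N -> (theta t.+1)^-1 <= (theta t)^-1.
    move=> /andP[t1 tT]; rewrite lef_pV2 ?posrE ?th_mono ?t1 //.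
    - exact: th_gt0 t.+1 tT.
    - by rewrite th_gt0 // t1 ltnW.
  have := telescope_nonincreasing T_gt0 w_mono (fun t => divr_ge0 (D_ge0 t) (ler0n _ 2)).
  by rewrite DT mul0r mulr0 addr0 invfM mulrC mulrA.
have := ler_sum_nat f_le; rewrite !big_split /= sumrN; lra.
Qed.

Lemma sumeB_fine (m n : nat) (f g : nat -> \bar R) :
  (forall t, (m <= t < n)%N -> f t \is a fin_num) ->
  (forall t, (m <= t < n)%N -> g t \is a fin_num) ->
  (\sum_(m <= t < n) f t - \sum_(m <= t < n) g t)%E
    = (\sum_(m <= t < n) (fine (f t) - fine (g t)))%:E.
Proof.
move=> f_fin g_fin; rewrite sumrB EFinB -!sumEFin.
by congr (_ - _)%E; apply: eq_big_nat => t mtn; rewrite fineK ?f_fin ?g_fin.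
Qed.

End RealFacts.

Section NormedSpace.
Variables (R : realType) (E : completeNormedModType R).

Lemma norm_le_diam (C : set E) p q : C p -> C q -> (`|p - q|%:E <= diam C)%E.
Proof. by move=> Cp Cq; apply: ereal_sup_ubound; exists p => //; exists q. Qed.

Lemma lam_ge0 (xs xh : E) : 0 <= lam xs xh.
Proof. by rewrite le_min ler01 andbT divr_ge0. Qed.

Lemma lam_le1 (xs xh : E) : lam xs xh <= 1.
Proof. by rewrite ge_min lexx orbT. Qed.

Lemma lam_mul_norm (xs xh : E) :
  lam xs xh * `|xs - xh| = Num.min `|xs - xh| `|xs|.
Proof.
have [->|d0] := eqVneq `|xs - xh| 0; first by rewrite mulr0 min_l.
by rewrite /lam minr_pMl // mul1r divfK // minC.
Qed.

Lemma xs_sub_yhat (xs xh : E) : xs - yhat xs xh = lam xs xh *: (xs - xh).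
Proof.
rewrite /yhat scalerBl scale1r scalerBr.
by rewrite opprD opprB addrCA subrKC addrC.
Qed.

Lemma xh_sub_yhat (xs xh : E) :
  xh - yhat xs xh = (1 - lam xs xh) *: (xh - xs).
Proof.
have -> : xh - yhat xs xh = (xh - xs) + (xs - yhat xs xh) by rewrite addrA subrK.
by rewrite xs_sub_yhat scalerBl scale1r -scalerN opprB.
Qed.

Lemma norm_xs_sub_yhat (xs xh : E) :
  `|xs - yhat xs xh| = Num.min `|xs - xh| `|xs|.
Proof. by rewrite xs_sub_yhat normrZ ger0_norm ?lam_ge0 ?lam_mul_norm. Qed.

Lemma norm_xh_sub_yhat (xs xh : E) :
  `|xh - yhat xs xh| = pospart (`|xs - xh| - `|xs|).
Proof.
rewrite xh_sub_yhat normrZ ger0_norm ?subr_ge0 ?lam_le1 //.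
rewrite mulrBl mul1r distrC lam_mul_norm /pospart.
have [d_le|d_gt] := leP `|xs - xh| `|xs|.
- by rewrite subrr max_r // subr_le0.
- by rewrite max_l // subr_ge0 ltW.
Qed.

End NormedSpace.

Section InnerProductSpace.
Variables (R : realType) (E : completeNormedModType R) (ip : E -> E -> R).
Hypothesis ipE : is_inner_product ip.

Lemma ipC x y : ip x y = ip y x. Proof. by case: ipE. Qed.

Lemma ipZl k x y : ip (k *: x) y = k * ip x y. Proof. by case: ipE. Qed.

Lemma ipBl x y z : ip (x - y) z = ip x z - ip y z.
Proof. by case: ipE => _ ipD _ _; rewrite ipD -scaleN1r ipZl mulN1r. Qed.

Lemma ipBr x y z : ip z (x - y) = ip z x - ip z y.
Proof. by rewrite ipC ipBl !(ipC z). Qed.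

Lemma ipZr k x y : ip x (k *: y) = k * ip x y.
Proof. by rewrite ipC ipZl ipC. Qed.

Lemma ip0r x : ip x 0 = 0.
Proof. by rewrite -(subrr x) ipBr subrr. Qed.

Lemma ipNr x y : ip x (- y) = - ip x y.
Proof. by rewrite -sub0r ipBr ip0r sub0r. Qed.

Lemma normB_sqr x y : `|x - y| ^+ 2 = `|x| ^+ 2 - 2 * ip x y + `|y| ^+ 2.
Proof.
case: ipE => _ _ _ ip_sqr.
by rewrite -!ip_sqr ipBl !ipBr (ipC y x); lra.
Qed.

Lemma cauchy_schwarz x y : ip x y <= `|x| * `|y|.
Proof.
have [->|x0] := eqVneq x 0; first by rewrite ipC ip0r normr0 mul0r.
have [->|y0] := eqVneq y 0; first by rewrite ip0r normr0 mulr0.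
have nxy : 0 < `|x| * `|y| by rewrite mulr_gt0 ?normr_gt0.
have := sqr_ge0 `| `|y| *: x - `|x| *: y |.
rewrite normB_sqr ipZr ipC ipZr ipC !normrZ !normr_id => h.
by rewrite -(ler_pM2l nxy); nra.
Qed.

Lemma subgrad_fine_le (f : E -> \bar R) x y s :
  is_subgrad ip f x s -> f y \is a fin_num ->
  fine (f x) - fine (f y) <= ip s (x - y).
Proof.
case=> fx sub fy; have := sub y.
by rewrite -(fineK fx) -(fineK fy) -EFinD lee_fin -(opprB x y) ipNr; lra.
Qed.

Lemma linearized_regret_le (m n : nat) (phi : nat -> E -> \bar R)
    (x s : nat -> E) z r :
  (forall t, (m <= t < n)%N -> is_subgrad ip (phi t) (x t) (s t)) ->
  (forall t, (m <= t < n)%N -> phi t z \is a fin_num) ->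
  \sum_(m <= t < n) ip (s t) (x t - z) <= r ->
  (\sum_(m <= t < n) phi t (x t) - \sum_(m <= t < n) phi t z <= r%:E)%E.
Proof.
move=> x_sub z_fin le_r.
have x_fin t : (m <= t < n)%N -> phi t (x t) \is a fin_num by case/x_sub.
rewrite (sumeB_fine x_fin z_fin) lee_fin; apply: le_trans le_r.
by apply: ler_sum_nat => t mtn; apply: subgrad_fine_le (x_sub t mtn) (z_fin t mtn).
Qed.

Definition three_point (th : R) (g u p c : E) : Prop :=
  th * ip g (p - c) <= (`|u - c| ^+ 2 - `|u - p| ^+ 2 - `|p - c| ^+ 2) / 2.

Lemma three_point_refl th g u c : three_point th g u c c.
Proof. by rewrite /three_point !subrr ip0r normr0 expr0n /=; lra. Qed.

Section Projection.
Variable C : set E.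
Hypothesis convC : convex_set C.

Lemma convex_set_segment c p s : C c -> C p -> 0 <= s -> s <= 1 ->
  C (p + s *: (c - p)).
Proof.
move=> Cc Cp s0 s1.
have -> : p + s *: (c - p) = s *: c + (1 - s) *: p.
  by rewrite scalerBl scale1r scalerBr addrCA.
by have := convC (Itv01 s0 s1) (mem_set Cc) (mem_set Cp); rewrite inE.
Qed.

(* Moving from [p] towards [c] by [s] changes [|u - p| ^+ 2] by
   [- 2 s <u - p, c - p> + s ^+ 2 |c - p| ^+ 2], which must be nonnegative
   for all small [s > 0]. *)
Lemma proj_ip_le0 u p c : is_proj C u p -> C c -> ip (u - p) (c - p) <= 0.
Proof.
move=> [Cp p_min] Cc.
set A := ip (u - p) (c - p); set K := `|c - p| ^+ 2.
have K0 : 0 <= K := sqr_ge0 _.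
have small_step s : 0 < s -> s <= 1 -> 2 * A <= s * K.
  move=> s0 s1.
  have := p_min _ (convex_set_segment Cc Cp (ltW s0) s1).
  rewrite opprD addrA -(ler_pXn2r (n := 2)) ?nnegrE //.
  rewrite [X in _ <= X]normB_sqr ipZr normrZ ger0_norm ?exprMn; last exact: ltW.
  by rewrite -/A -/K => h; rewrite -(ler_pM2l s0); nra.
rewrite leNgt; apply/negP => A0.
have KA : 0 < K + A by lra.
have := small_step (A / (K + A)) (divr_gt0 A0 KA).
rewrite ler_pdivrMr // mul1r mulrAC ler_pdivlMr //; nra.
Qed.

Lemma proj_three_point th g u p c :
  is_proj C (u - th *: g) p -> C c -> three_point th g u p c.
Proof.
move=> p_proj Cc; have := proj_ip_le0 p_proj Cc.
rewrite /three_point addrAC ipBl ipZl -(opprB c p) ipNr.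
have -> : `|u - c| = `|(u - p) - (c - p)| by rewrite opprB addrA subrK.
by rewrite normB_sqr normrN; lra.
Qed.

Lemma proj_nonexpansive u v p q :
  is_proj C u p -> is_proj C v q -> `|p - q| <= `|u - v|.
Proof.
move=> p_proj q_proj.
have := proj_ip_le0 p_proj q_proj.1; have := proj_ip_le0 q_proj p_proj.1.
rewrite -[q - p]opprB ipNr => hq hp.
have [->|pq0] := eqVneq (p - q) 0; first by rewrite normr0.
have npq : 0 < `|p - q| by rewrite normr_gt0.
have ip_uv : ip (u - v) (p - q) = ip (u - p) (p - q) - ip (v - q) (p - q) + `|p - q| ^+ 2.
  by case: ipE => _ _ _ <-; rewrite !ipBl; lra.
have cs := cauchy_schwarz (u - v) (p - q).
by rewrite -(ler_pM2r npq) -expr2; lra.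
Qed.

Lemma round_bound_Qstar th u x w z g h :
  0 <= th -> is_proj C (u - th *: h) x -> C w -> three_point th g u w z ->
  th * ip g (x - z) <= (`|u - z| ^+ 2 - `|w - z| ^+ 2) / 2
     + Qstar (diam C) (th * `|g - h|) - `|x - u| ^+ 2 / 2.
Proof.
move=> th0 x_proj Cw; rewrite /three_point => w_bound.
have := proj_three_point x_proj Cw; rewrite /three_point => x_bound.
have := Qstar_ge (mulr_ge0 th0 (normr_ge0 (g - h))) (normr_ge0 (x - w))
  (norm_le_diam x_proj.1 Cw).
have := ler_wpM2l th0 (cauchy_schwarz (g - h) (x - w)); rewrite mulrA.
have -> : ip g (x - z) = ip g (w - z) + ip h (x - w) + ip (g - h) (x - w).
  by rewrite !ipBl !ipBr; lra.
by rewrite !mulrDr (distrC x u); lra.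
Qed.

Lemma round_bound_Phi th u x y w z g h :
  0 <= th -> is_proj C (u - th *: h) x ->
  is_proj C (u - th *: yhat g h) y -> C w -> three_point th g u w z ->
  th * ip g (x - z) <= (`|u - z| ^+ 2 - `|w - z| ^+ 2) / 2
     + Phi (diam C) th g h - `|y - u| ^+ 2 / 2.
Proof.
move=> th0 x_proj y_proj Cw w_bound.
have := round_bound_Qstar th0 y_proj Cw w_bound; rewrite norm_xs_sub_yhat.
have xy : `|x - y| <= min_rho (diam C) (th * pospart (`|g - h| - `|g|)).
  apply: le_min_rho (norm_le_diam x_proj.1 y_proj.1) _.
  apply: le_trans (proj_nonexpansive x_proj y_proj) _.
  have -> : u - th *: h - (u - th *: yhat g h) = th *: (yhat g h - h).
    by rewrite opprB addrC addrA subrK scalerBr.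
  by rewrite normrZ ger0_norm // distrC norm_xh_sub_yhat.
have := ler_wpM2l th0 (le_trans (cauchy_schwarz g (x - y)) (ler_wpM2l (normr_ge0 g) xy)).
have -> : ip g (x - z) = ip g (y - z) + ip g (x - y) by rewrite !ipBr; lra.
by rewrite mulrDr mulrA /Phi; lra.
Qed.

End Projection.
End InnerProductSpace.

Unset Implicit Arguments.

Theorem corollary8 (R : realType) (E : completeNormedModType R)
  (ip : E -> E -> R) (C : set E) (a : E) (T : nat)
  (theta : nat -> R) (xhs : nat -> E) (phi : nat -> E -> \bar R)
  (xt x xs y : nat -> E) :
  is_inner_product ip ->
  closed C -> convex_set C -> C a ->
  0 < theta 1%N ->
  (forall t, (1 <= t < T)%N -> theta t <= theta t.+1) ->
  (* adversary: proper losses, C inside dom of the subdifferential *)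
  (forall t, (1 <= t <= T)%N -> proper_fun (phi t)) ->
  (forall t, (1 <= t <= T)%N -> forall c, C c -> exists s, is_subgrad ip (phi t) c s) ->
  (* learner *)
  xt 1%N = a ->
  (forall t, (2 <= t <= T)%N ->
     is_proj C (xt t.-1 - theta t.-1 *: xs t.-1) (xt t)) ->
  (forall t, (1 <= t <= T)%N -> is_proj C (xt t - theta t *: xhs t) (x t)) ->
  (forall t, (1 <= t <= T)%N -> is_subgrad ip (phi t) (x t) (xs t)) ->
  (* y_t = P_C (xt_t - theta_t yhat*_t) *)
  (forall t, (1 <= t <= T)%N ->
     is_proj C (xt t - theta t *: yhat (xs t) (xhs t)) (y t)) ->
  forall z, C z ->
  ((\sum_(1 <= t < T.+1) phi t (x t) - \sum_(1 <= t < T.+1) phi t z)%E <=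
     (`|z - a| ^+ 2 / (2 * theta 1%N)
      + \sum_(1 <= t < T.+1) (theta t)^-1 * Qstar (diam C) (theta t * `|xs t - xhs t|)
      - \sum_(1 <= t < T.+1) `|x t - xt t| ^+ 2 / (2 * theta t))%:E)%E
  /\
  ((\sum_(1 <= t < T.+1) phi t (x t) - \sum_(1 <= t < T.+1) phi t z)%E <=
     (`|z - a| ^+ 2 / (2 * theta 1%N)
      + \sum_(1 <= t < T.+1) (theta t)^-1 * Phi (diam C) (theta t) (xs t) (xhs t)
      - \sum_(1 <= t < T.+1) `|y t - xt t| ^+ 2 / (2 * theta t))%:E)%E.
Proof.
move=> ipE _ convC Ca th1 th_mono _ phi_subgrad xt1 xt_proj x_proj xs_subgrad
  y_proj z Cz.
have th_gt0 := nondecreasing_gt0 th1 th_mono.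
have phi_z_fin t : (1 <= t <= T)%N -> phi t z \is a fin_num.
  by move=> tT; have [s []] := phi_subgrad t tT z Cz.
(* [w t] is the point the round-[t] regret is split at: the next iterate,
   and [z] itself after the last round. *)
pose w t := if (t < T)%N then xt t.+1 else z.
pose D t := if (t <= T)%N then `|xt t - z| ^+ 2 else 0.
have w_bound t : (1 <= t <= T)%N ->
    C (w t) /\ three_point ip (theta t) (xs t) (xt t) (w t) z.
  rewrite /w; case: ifP => [tT /andP[t1 _]|_ _]; last by split; last exact: three_point_refl.
  have next : is_proj C (xt t - theta t *: xs t) (xt t.+1) by apply: xt_proj; rewrite ltnS t1.
  by split; [exact: next.1 | exact: proj_three_point next Cz].
have D_xt t : (1 <= t <= T)%N -> `|xt t - z| ^+ 2 = D t.
  by case/andP=> _ tT; rewrite /D tT.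
have D_w t : (1 <= t <= T)%N -> `|w t - z| ^+ 2 = D t.+1.
  by move=> _; rewrite /w /D ltnNge; case: leqP; rewrite // subrr normr0 expr0n.
have D_ge0 t : 0 <= D t by rewrite /D; case: ifP.
have D1 : D 1%N <= `|z - a| ^+ 2 by rewrite /D xt1 distrC; case: ifP.
split; apply: (linearized_regret_le ipE (m:=1%N) (n:=T.+1) xs_subgrad phi_z_fin).
all: apply: (sum_round_bounds th1 th_mono D_ge0 _ D1) => [|t tT];
  first by rewrite /D ltnn.
all: have [w_C w_3p] := w_bound t tT; rewrite -D_xt // -D_w //.
- exact: (round_bound_Qstar ipE convC (ltW (th_gt0 t tT)) (x_proj t tT) w_C w_3p).
- exact: (round_bound_Phi ipE convC (ltW (th_gt0 t tT)) (x_proj t tT) (y_proj t tT) w_C w_3p).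
Qed.
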